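(* Let $T$ be $\mathcal{P}_{\mathsf{fs}}$ or $\mathcal{P}_{\mathsf{ufs}}$ on $\mathsf{Nom}$. If a locally monotone endofunctor $H$ on $\mathrm{Kl}(T)$ has an initial algebra $(\mu H,\iota)$, then $(\mu H,\iota^{-1})$ is a terminal $H$-coalgebra.
   Context: Fix a countably infinite set $\mathbb{A}$ of names; $\mathsf{Nom}$ is the category of nominal sets (sets with an action of the group of finite permutations of $\mathbb{A}$ in which every element has finite support) and equivariant maps. For a nominal set $X$, $\mathcal{P}_{\mathsf{fs}}X$ (resp. $\mathcal{P}_{\mathsf{ufs}}X$) is the nominal set of finitely supported subsets (resp. uniformly finitely supported subsets, i.e. subsets $A$ with $\bigcup_{x\in A}\mathrm{supp}(x)$ finite), with the action $\pi\cdot A=\{\pi\cdot x\}$; these are monads on $\mathsf{Nom}$ with unit $x\mapsto\{x\}$ and multiplication union. The Kleisli category $\mathrm{Kl}(T)$ has nominal sets as objects and equivariant maps $X\to TY$ as morphisms $X\to Y$, composed by $g\bullet f(x)=\bigcup_{y\in f(x)}g(y)$. Hom-sets of $\mathrm{Kl}(T)$ are ordered pointwise by inclusion; $H$ is locally monotone if its action on each hom-set is monotone for this order. *)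

From Stdlib Require Import List.
Import ListNotations.


Record perm := Perm {
  pf : nat -> nat;
  pg : nat -> nat;
  pfg : forall a, pf (pg a) = a;
  pgf : forall a, pg (pf a) = a;
  pfin : exists l : list nat, forall a, ~ In a l -> pf a = a }.

Definition pid : perm.
Proof.
  refine (@Perm (fun a => a) (fun a => a) (fun _ => eq_refl) (fun _ => eq_refl) _).
  exists nil; intros a _; reflexivity.
Defined.

Definition pcomp (p q : perm) : perm.
Proof.
  refine (@Perm (fun a => pf p (pf q a)) (fun a => pg q (pg p a)) _ _ _).
  - intro a; rewrite (pfg q), (pfg p); reflexivity.
  - intro a; rewrite (pgf p), (pgf q); reflexivity.
  - destruct (pfin p) as [lp Hp]; destruct (pfin q) as [lq Hq].
    exists (lp ++ lq); intros a Ha.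
    rewrite Hq, Hp; [reflexivity| |]; intro Hin; apply Ha; apply in_or_app; auto.
Defined.

Definition pinv (p : perm) : perm.
Proof.
  refine (@Perm (pg p) (pf p) (pgf p) (pfg p) _).
  destruct (pfin p) as [l Hl]; exists l; intros a Ha.
  rewrite <- (Hl a Ha) at 1; apply pgf.
Defined.

Definition fixes (p : perm) (l : list nat) : Prop := forall a, In a l -> pf p a = a.

Definition supports {X : Type} (act : perm -> X -> X) (l : list nat) (x : X) : Prop :=
  forall p, fixes p l -> act p x = x.

Record NomSet := {
  ncar :> Type;
  nact : perm -> ncar -> ncar;
  nact_id : forall x, nact pid x = x;
  nact_comp : forall p q x, nact (pcomp p q) x = nact p (nact q x);
  nfs : forall x, exists l : list nat, supports nact l x }.

(* a \in supp(x): a belongs to every finite support of x (least support) *)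
Definition in_supp (X : NomSet) (x : ncar X) (a : nat) : Prop :=
  forall l, supports (nact X) l x -> In a l.

(* subsets of X and the action  pi . A = { pi . x | x in A } *)
Definition subset (X : NomSet) := X -> Prop.
Definition sact (X : NomSet) (p : perm) (A : subset X) : subset X :=
  fun y => A (nact X (pinv p) y).

Definition fs_subset (X : NomSet) (A : subset X) : Prop :=
  exists l : list nat, forall p, fixes p l -> sact X p A = A.

(* uniformly finitely supported subsets: \bigcup_{x in A} supp(x) is finite *)
Definition ufs_subset (X : NomSet) (A : subset X) : Prop :=
  exists l : list nat, forall x a, A x -> in_supp X x a -> In a l.

Inductive PowKind := Pfs | Pufs.

(* A is an element of T X, for T = P_fs or P_ufs *)
Definition Tsub (k : PowKind) (X : NomSet) (A : subset X) : Prop :=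
  match k with Pfs => fs_subset X A | Pufs => ufs_subset X A end.

(* a morphism X -> Y in Kl(T) is an equivariant map X -> T Y; we represent the
   underlying map x |-> f x as a relation and the morphism property as a predicate *)
Definition klrel (X Y : NomSet) := X -> subset Y.

Definition klhom (k : PowKind) (X Y : NomSet) (f : klrel X Y) : Prop :=
  (forall p x, f (nact X p x) = sact Y p (f x)) /\ (forall x, Tsub k Y (f x)).

Definition klid (X : NomSet) : klrel X X := fun x y => y = x.

Definition klcomp (X Y Z : NomSet) (g : klrel Y Z) (f : klrel X Y) : klrel X Z :=
  fun x z => exists y, f x y /\ g y z.

Arguments klcomp {X Y Z} g f _ _.

Definition klle (X Y : NomSet) (f g : klrel X Y) : Prop :=
  forall x y, f x y -> g x y.

Arguments klle {X Y} f g.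

Record KlEndo (k : PowKind) := {
  Hob : NomSet -> NomSet;
  Hmor : forall X Y : NomSet, klrel X Y -> klrel (Hob X) (Hob Y);
  Hmor_hom : forall X Y (f : klrel X Y),
      klhom k X Y f -> klhom k (Hob X) (Hob Y) (Hmor X Y f);
  Hmor_id : forall X, Hmor X X (klid X) = klid (Hob X);
  Hmor_comp : forall X Y Z (f : klrel X Y) (g : klrel Y Z),
      klhom k X Y f -> klhom k Y Z g ->
      Hmor X Z (klcomp g f) = klcomp (Hmor Y Z g) (Hmor X Y f) }.

Arguments Hob {k} _ _.
Arguments Hmor {k} _ {X Y} _ _ _.
Arguments Hmor_hom {k} _ {X Y} f _.

Definition locally_monotone (k : PowKind) (H : KlEndo k) : Prop :=
  forall X Y (f g : klrel X Y), klhom k X Y f -> klhom k X Y g ->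
    klle f g -> klle (Hmor H f) (Hmor H g).

Arguments locally_monotone {k} H.

Definition is_initial_algebra (k : PowKind) (H : KlEndo k) (mu : NomSet)
    (iota : klrel (Hob H mu) mu) : Prop :=
  klhom k (Hob H mu) mu iota /\
  forall (A : NomSet) (a : klrel (Hob H A) A), klhom k (Hob H A) A a ->
    exists h : klrel mu A,
      klhom k mu A h /\ klcomp h iota = klcomp a (Hmor H h) /\
      forall h' : klrel mu A, klhom k mu A h' ->
        klcomp h' iota = klcomp a (Hmor H h') -> h' = h.

Arguments is_initial_algebra {k} H mu iota.

Definition is_terminal_coalgebra (k : PowKind) (H : KlEndo k) (nu : NomSet)
    (c : klrel nu (Hob H nu)) : Prop :=
  klhom k nu (Hob H nu) c /\
  forall (B : NomSet) (b : klrel B (Hob H B)), klhom k B (Hob H B) b ->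
    exists h : klrel B nu,
      klhom k B nu h /\ klcomp c h = klcomp (Hmor H h) b /\
      forall h' : klrel B nu, klhom k B nu h' ->
        klcomp c h' = klcomp (Hmor H h') b -> h' = h.

Arguments is_terminal_coalgebra {k} H nu c.

(* Hom-sets of Kl(T) are complete lattices under inclusion: a union of
   equivariant maps is equivariant, and for P_ufs it stays uniformly
   supported because every element of f x is supported by any support of x.
   By Lambek's lemma iota has an inverse j.  Given a coalgebra b : B -> HB,
   the coalgebra morphisms B -> mu are the fixpoints of the monotone map
   f |-> iota . Hf . b, so the greatest one exists by Knaster-Tarski.  If h1
   and h2 are coalgebra morphisms, the largest m with m . h1 <= h2 is a
   prefixpoint of f |-> iota . Hf . j.  The least prefixpoint of that map is
   a fixpoint, hence an algebra endomorphism of the initial algebra, hence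
   the identity; so id <= m, i.e. h1 <= h2. *)
From Stdlib Require Import List Arith FunctionalExtensionality PropExtensionality ProofIrrelevance.
Import ListNotations.

Lemma perm_ext (p q : perm) :
  (forall a, pf p a = pf q a) -> (forall a, pg p a = pg q a) -> p = q.
Proof.
  destruct p as [f g fg gf fin], q as [f' g' fg' gf' fin']; simpl; intros Ef Eg.
  assert (f = f') by (apply functional_extensionality; exact Ef).
  assert (g = g') by (apply functional_extensionality; exact Eg).
  subst f' g'.
  rewrite (proof_irrelevance _ fg fg'), (proof_irrelevance _ gf gf'),
    (proof_irrelevance _ fin fin').
  reflexivity.
Qed.

Lemma nact_pinv_l (X : NomSet) (p : perm) (x : X) : nact X (pinv p) (nact X p x) = x.
Proof.
  rewrite <- nact_comp.
  replace (pcomp (pinv p) p) with pid by (apply perm_ext; intro; symmetry; apply pgf).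
  apply nact_id.
Qed.

Lemma nact_pinv_r (X : NomSet) (p : perm) (x : X) : nact X p (nact X (pinv p) x) = x.
Proof.
  rewrite <- nact_comp.
  replace (pcomp p (pinv p)) with pid by (apply perm_ext; intro; symmetry; apply pfg).
  apply nact_id.
Qed.

Lemma supports_nact_inv (X : NomSet) (p : perm) (l : list nat) (x : X) :
  supports (nact X) l (nact X p x) -> supports (nact X) (map (pg p) l) x.
Proof.
  intros Hl q Hq.
  assert (Hconj : fixes (pcomp p (pcomp q (pinv p))) l).
  { intros c Hc; simpl. rewrite (Hq (pg p c)) by (apply in_map; exact Hc). apply pfg. }
  pose proof (Hl _ Hconj) as E.
  rewrite !nact_comp, nact_pinv_l in E.
  apply (f_equal (nact X (pinv p))) in E.
  rewrite !nact_pinv_l in E. exact E.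
Qed.

Lemma in_supp_nact (X : NomSet) (p : perm) (x : X) (a : nat) :
  in_supp X x a -> in_supp X (nact X p x) (pf p a).
Proof.
  intros Ha l Hl.
  destruct (proj1 (in_map_iff _ _ _) (Ha _ (supports_nact_inv X p l x Hl))) as [c [<- Hc]].
  rewrite pfg; exact Hc.
Qed.

Definition swap_fun (a b c : nat) : nat :=
  if Nat.eqb c a then b else if Nat.eqb c b then a else c.

Lemma swap_fun_involutive (a b c : nat) : swap_fun a b (swap_fun a b c) = c.
Proof.
  unfold swap_fun.
  destruct (Nat.eqb_spec c a) as [Hca|Hca];
    [destruct (Nat.eqb_spec b a) as [Hba|Hba]; [congruence|rewrite Nat.eqb_refl; congruence]|].
  destruct (Nat.eqb_spec c b) as [Hcb|Hcb]; [rewrite Nat.eqb_refl; congruence|].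
  apply Nat.eqb_neq in Hca, Hcb; rewrite Hca, Hcb; reflexivity.
Qed.

Lemma swap_fun_l (a b : nat) : swap_fun a b a = b.
Proof. unfold swap_fun; rewrite Nat.eqb_refl; reflexivity. Qed.

Lemma swap_fun_other (a b c : nat) : c <> a -> c <> b -> swap_fun a b c = c.
Proof. intros Hca Hcb; unfold swap_fun; apply Nat.eqb_neq in Hca, Hcb; rewrite Hca, Hcb; reflexivity. Qed.

Definition swap (a b : nat) : perm.
Proof.
  refine (@Perm (swap_fun a b) (swap_fun a b)
            (swap_fun_involutive a b) (swap_fun_involutive a b) _).
  exists [a; b]; intros c Hc.
  apply swap_fun_other; intros ->; apply Hc; simpl; auto.
Defined.

Lemma fresh_name (l : list nat) : exists b, ~ In b l.
Proof.
  exists (S (list_max l)); intro Hin.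
  assert (Hle : S (list_max l) <= list_max l).
  { apply (proj1 (Forall_forall _ l) (proj1 (list_max_le l _) (le_n _))); exact Hin. }
  exact (Nat.nle_succ_diag_l _ Hle).
Qed.

(* The support of a uniformly finitely supported set is the union of the
   supports of its elements: a name a outside l but in supp y could be swapped
   with a fresh b, producing an element of A whose support contains b. *)
Lemma ufs_member_supp_incl (Y : NomSet) (A : subset Y) (l U : list nat) :
  (forall p, fixes p l -> sact Y p A = A) ->
  (forall y a, A y -> in_supp Y y a -> In a U) ->
  forall y a, A y -> in_supp Y y a -> In a l.
Proof.
  intros Hl HU y a Ay Ha.
  destruct (in_dec Nat.eq_dec a l) as [|Hal]; [assumption|exfalso].
  destruct (fresh_name (a :: l ++ U)) as [b Hb].
  assert (Hba : b <> a) by (intros ->; apply Hb; left; reflexivity).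
  assert (Hbl : ~ In b l) by (intro; apply Hb; right; apply in_or_app; auto).
  assert (HbU : ~ In b U) by (intro; apply Hb; right; apply in_or_app; auto).
  assert (Hfix : fixes (swap a b) l).
  { intros c Hc; apply swap_fun_other; intros ->; contradiction. }
  assert (Ay' : A (nact Y (swap a b) y)).
  { rewrite <- (Hl _ Hfix); unfold sact; rewrite nact_pinv_l; exact Ay. }
  apply HbU, (HU _ b Ay').
  pose proof (in_supp_nact Y (swap a b) y a Ha) as Hb'.
  change (pf (swap a b) a) with (swap_fun a b a) in Hb'.
  rewrite swap_fun_l in Hb'; exact Hb'.
Qed.

Definition equivariant (X Y : NomSet) (f : klrel X Y) : Prop :=
  forall p x, f (nact X p x) = sact Y p (f x).

Definition supp_decreasing (X Y : NomSet) (f : klrel X Y) : Prop :=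
  forall x y a, f x y -> in_supp Y y a -> in_supp X x a.

Lemma klhom_iff (k : PowKind) (X Y : NomSet) (f : klrel X Y) :
  klhom k X Y f <-> equivariant X Y f /\ (k = Pufs -> supp_decreasing X Y f).
Proof.
  split.
  - intros [Heq Hsub]; split; [exact Heq|]; intros ->.
    intros x y a Hxy Ha l Hl.
    destruct (Hsub x) as [U HU].
    apply (ufs_member_supp_incl Y (f x) l U) with (y := y); auto.
    intros p Hp; rewrite <- Heq, (Hl p Hp); reflexivity.
  - intros [Heq Hdec]; split; [exact Heq|]; intro x.
    destruct (nfs X x) as [l Hl]; destruct k; exists l.
    + intros p Hp; rewrite <- Heq, (Hl p Hp); reflexivity.
    + intros y a Hy Ha; exact (Hdec eq_refl x y a Hy Ha l Hl).
Qed.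

Lemma subset_ext (X : NomSet) (A B : subset X) : (forall x, A x <-> B x) -> A = B.
Proof.
  intros E; apply functional_extensionality; intro x; apply propositional_extensionality, E.
Qed.

Lemma klrel_ext (X Y : NomSet) (f g : klrel X Y) : (forall x y, f x y <-> g x y) -> f = g.
Proof. intros E; apply functional_extensionality; intro x; apply subset_ext, E. Qed.

Lemma equivariant_intro (X Y : NomSet) (f : klrel X Y) :
  (forall p x y, f x y -> f (nact X p x) (nact Y p y)) -> equivariant X Y f.
Proof.
  intros Hf p x; apply subset_ext; intro y; unfold sact; split; intro Hxy.
  - apply (Hf (pinv p)) in Hxy; rewrite nact_pinv_l in Hxy; exact Hxy.
  - apply (Hf p) in Hxy; rewrite nact_pinv_r in Hxy; exact Hxy.
Qed.

Lemma equivariant_elim (X Y : NomSet) (f : klrel X Y) p x y :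
  equivariant X Y f -> f x y -> f (nact X p x) (nact Y p y).
Proof. intros Hf Hxy; rewrite Hf; unfold sact; rewrite nact_pinv_l; exact Hxy. Qed.

Lemma klhom_id (k : PowKind) (X : NomSet) : klhom k X X (klid X).
Proof.
  apply klhom_iff; split.
  - apply equivariant_intro; intros p x y ->; reflexivity.
  - intros _ x y a ->; auto.
Qed.

Lemma klhom_comp (k : PowKind) (X Y Z : NomSet) (f : klrel X Y) (g : klrel Y Z) :
  klhom k X Y f -> klhom k Y Z g -> klhom k X Z (klcomp g f).
Proof.
  rewrite !klhom_iff; intros [Ef Df] [Eg Dg]; split.
  - apply equivariant_intro; intros p x z [y [Hxy Hyz]].
    exists (nact Y p y); split; apply equivariant_elim; assumption.
  - intros Hk x z a [y [Hxy Hyz]] Ha; exact (Df Hk x y a Hxy (Dg Hk y z a Hyz Ha)).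
Qed.

Definition bigU (k : PowKind) {X Y : NomSet} (P : klrel X Y -> Prop) : klrel X Y :=
  fun x y => exists f, P f /\ klhom k X Y f /\ f x y.

Definition bigI (k : PowKind) {X Y : NomSet} (P : klrel X Y -> Prop) : klrel X Y :=
  fun x y => forall f, P f -> klhom k X Y f -> f x y.

Lemma klhom_bigU (k : PowKind) (X Y : NomSet) (P : klrel X Y -> Prop) :
  klhom k X Y (bigU k P).
Proof.
  apply klhom_iff; split.
  - apply equivariant_intro; intros p x y [f [Pf [Hf Hxy]]].
    exists f; split; [exact Pf|split; [exact Hf|]].
    apply equivariant_elim; [apply klhom_iff in Hf; apply Hf | exact Hxy].
  - intros Hk x y a [f [_ [Hf Hxy]]]; apply klhom_iff in Hf; exact (proj2 Hf Hk x y a Hxy).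
Qed.

(* Nonemptiness matters for P_ufs: the full relation is not uniformly supported. *)
Lemma klhom_bigI (k : PowKind) (X Y : NomSet) (P : klrel X Y -> Prop) (f0 : klrel X Y) :
  P f0 -> klhom k X Y f0 -> klhom k X Y (bigI k P).
Proof.
  intros Pf0 Hf0; apply klhom_iff; split.
  - apply equivariant_intro; intros p x y Hxy f Pf Hf.
    apply equivariant_elim; [apply klhom_iff in Hf; apply Hf | exact (Hxy f Pf Hf)].
  - intros Hk x y a Hxy; pose proof (Hxy f0 Pf0 Hf0) as Hxy0.
    apply klhom_iff in Hf0; exact (proj2 Hf0 Hk x y a Hxy0).
Qed.

Lemma klcomp_assoc {W X Y Z : NomSet} (h : klrel Y Z) (g : klrel X Y) (f : klrel W X) :
  klcomp h (klcomp g f) = klcomp (klcomp h g) f.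
Proof.
  apply klrel_ext; intros w z; unfold klcomp; split.
  - intros [y [[x [Hwx Hxy]] Hyz]]; exists x; split; [|exists y]; auto.
  - intros [x [Hwx [y [Hxy Hyz]]]]; exists y; split; [exists x|]; auto.
Qed.

Lemma klcomp_id_l {X Y : NomSet} (f : klrel X Y) : klcomp (klid Y) f = f.
Proof.
  apply klrel_ext; intros x y; unfold klcomp, klid; split.
  - intros [y' [Hxy ->]]; exact Hxy.
  - intros Hxy; exists y; auto.
Qed.

Lemma klcomp_id_r {X Y : NomSet} (f : klrel X Y) : klcomp f (klid X) = f.
Proof.
  apply klrel_ext; intros x y; unfold klcomp, klid; split.
  - intros [x' [-> Hxy]]; exact Hxy.
  - intros Hxy; exists x; auto.
Qed.

Lemma klle_refl {X Y : NomSet} (f : klrel X Y) : klle f f.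
Proof. intros x y Hxy; exact Hxy. Qed.

Lemma klle_trans {X Y : NomSet} (f g h : klrel X Y) : klle f g -> klle g h -> klle f h.
Proof. intros Hfg Hgh x y Hxy; auto. Qed.

Lemma klle_antisym {X Y : NomSet} (f g : klrel X Y) : klle f g -> klle g f -> f = g.
Proof. intros Hfg Hgf; apply klrel_ext; split; auto. Qed.

Lemma klcomp_le {X Y Z : NomSet} (f f' : klrel X Y) (g g' : klrel Y Z) :
  klle f f' -> klle g g' -> klle (klcomp g f) (klcomp g' f').
Proof. intros Hf Hg x z [y [Hxy Hyz]]; exists y; auto. Qed.

Lemma le_bigU (k : PowKind) {X Y : NomSet} (P : klrel X Y -> Prop) (f : klrel X Y) :
  P f -> klhom k X Y f -> klle f (bigU k P).
Proof. intros Pf Hf x y Hxy; exists f; auto. Qed.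

Lemma bigU_le (k : PowKind) {X Y : NomSet} (P : klrel X Y -> Prop) (g : klrel X Y) :
  (forall f, P f -> klhom k X Y f -> klle f g) -> klle (bigU k P) g.
Proof. intros Hg x y [f [Pf [Hf Hxy]]]; exact (Hg f Pf Hf x y Hxy). Qed.

Lemma bigI_le (k : PowKind) {X Y : NomSet} (P : klrel X Y -> Prop) (f : klrel X Y) :
  P f -> klhom k X Y f -> klle (bigI k P) f.
Proof. intros Pf Hf x y Hxy; exact (Hxy f Pf Hf). Qed.

Lemma le_bigI (k : PowKind) {X Y : NomSet} (P : klrel X Y -> Prop) (g : klrel X Y) :
  (forall f, P f -> klhom k X Y f -> klle g f) -> klle g (bigI k P).
Proof. intros Hg x y Hxy f Pf Hf; exact (Hg f Pf Hf x y Hxy). Qed.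

Section KnasterTarski.

Variables (k : PowKind) (X Y : NomSet) (F : klrel X Y -> klrel X Y).
Hypothesis F_hom : forall f, klhom k X Y f -> klhom k X Y (F f).
Hypothesis F_mono : forall f g, klhom k X Y f -> klhom k X Y g -> klle f g -> klle (F f) (F g).

Definition klgfp : klrel X Y := bigU k (fun f => klle f (F f)).

Lemma klgfp_fixed : klgfp = F klgfp.
Proof.
  assert (Hgfp : klhom k X Y klgfp) by apply klhom_bigU.
  assert (Hpost : klle klgfp (F klgfp)).
  { apply bigU_le; intros f Hpost Hf.
    apply (klle_trans _ _ _ Hpost), F_mono; [exact Hf|exact Hgfp|].
    apply le_bigU; assumption. }
  apply klle_antisym; [exact Hpost|].
  apply le_bigU; [exact (F_mono _ _ Hgfp (F_hom _ Hgfp) Hpost)|exact (F_hom _ Hgfp)].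
Qed.

Definition kllfp : klrel X Y := bigI k (fun f => klle (F f) f).

Section WithPrefixpoint.

Variable f0 : klrel X Y.
Hypotheses (Hf0 : klhom k X Y f0) (pre_f0 : klle (F f0) f0).

Lemma klhom_kllfp : klhom k X Y kllfp.
Proof. exact (klhom_bigI k X Y (fun f => klle (F f) f) f0 pre_f0 Hf0). Qed.

Lemma kllfp_fixed : kllfp = F kllfp.
Proof.
  pose proof klhom_kllfp as Hlfp.
  assert (Hpre : klle (F kllfp) kllfp).
  { apply le_bigI; intros f Hpre Hf.
    refine (klle_trans _ _ _ _ Hpre); apply F_mono; [exact Hlfp|exact Hf|].
    apply bigI_le; assumption. }
  apply klle_antisym; [|exact Hpre].
  apply bigI_le; [exact (F_mono _ _ (F_hom _ Hlfp) Hlfp Hpre)|exact (F_hom _ Hlfp)].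
Qed.

End WithPrefixpoint.

End KnasterTarski.

Lemma initial_algebra_endo_id (k : PowKind) (H : KlEndo k) (mu : NomSet)
    (iota : klrel (Hob H mu) mu) :
  is_initial_algebra H mu iota ->
  forall f, klhom k mu mu f -> klcomp f iota = klcomp iota (Hmor H f) -> f = klid mu.
Proof.
  intros [Hiota Init] f Hf Ef.
  destruct (Init mu iota Hiota) as [h [_ [_ Uh]]].
  rewrite (Uh f Hf Ef); symmetry; apply Uh; [apply klhom_id|].
  rewrite Hmor_id, klcomp_id_l, klcomp_id_r; reflexivity.
Qed.

Lemma lambek (k : PowKind) (H : KlEndo k) (mu : NomSet) (iota : klrel (Hob H mu) mu) :
  is_initial_algebra H mu iota ->
  exists j : klrel mu (Hob H mu),
    klhom k mu (Hob H mu) j /\ klcomp j iota = klid (Hob H mu) /\ klcomp iota j = klid mu.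
Proof.
  intros Hinit; pose proof Hinit as [Hiota Init].
  destruct (Init _ (Hmor H iota) (Hmor_hom H iota Hiota)) as [j [Hj [Ej _]]].
  rewrite <- (Hmor_comp k H _ _ _ j iota Hj Hiota) in Ej.
  assert (Eiota_j : klcomp iota j = klid mu).
  { apply (initial_algebra_endo_id k H mu iota Hinit); [apply klhom_comp; assumption|].
    rewrite <- klcomp_assoc, Ej; reflexivity. }
  exists j; split; [exact Hj|split; [|exact Eiota_j]].
  rewrite Ej, Eiota_j, Hmor_id; reflexivity.
Qed.

Section TerminalCoalgebra.

Variables (k : PowKind) (H : KlEndo k) (mu : NomSet)
  (iota : klrel (Hob H mu) mu) (j : klrel mu (Hob H mu)).
Hypotheses (H_mono : locally_monotone H) (Hinit : is_initial_algebra H mu iota)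
  (Hj : klhom k mu (Hob H mu) j)
  (j_iota : klcomp j iota = klid (Hob H mu)) (iota_j : klcomp iota j = klid mu).

Definition unfold_step {B : NomSet} (b : klrel B (Hob H B)) (f : klrel B mu) : klrel B mu :=
  klcomp iota (klcomp (Hmor H f) b).

Lemma klhom_unfold_step (B : NomSet) (b : klrel B (Hob H B)) :
  klhom k B (Hob H B) b -> forall f, klhom k B mu f -> klhom k B mu (unfold_step b f).
Proof.
  intros Hb f Hf; apply klhom_comp; [apply klhom_comp; [exact Hb|apply Hmor_hom, Hf]|].
  exact (proj1 Hinit).
Qed.

Lemma unfold_step_mono (B : NomSet) (b : klrel B (Hob H B)) (f g : klrel B mu) :
  klhom k B mu f -> klhom k B mu g -> klle f g -> klle (unfold_step b f) (unfold_step b g).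
Proof.
  intros Hf Hg Hfg; apply klcomp_le; [|apply klle_refl].
  apply klcomp_le; [apply klle_refl|apply H_mono; assumption].
Qed.

Lemma coalgebra_morphism_iff_fixed (B : NomSet) (b : klrel B (Hob H B)) (h : klrel B mu) :
  klcomp j h = klcomp (Hmor H h) b <-> h = unfold_step b h.
Proof.
  unfold unfold_step; split; intro E.
  - rewrite <- E, klcomp_assoc, iota_j, klcomp_id_l; reflexivity.
  - rewrite E at 1; rewrite klcomp_assoc, j_iota, klcomp_id_l; reflexivity.
Qed.

Lemma unfold_step_comp (B C : NomSet) (b : klrel B (Hob H B)) (c : klrel C (Hob H C))
    (h : klrel B C) (f : klrel C mu) :
  klhom k B C h -> klhom k C mu f -> klcomp c h = klcomp (Hmor H h) b ->
  klcomp (unfold_step c f) h = unfold_step b (klcomp f h).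
Proof.
  intros Hh Hf Eh; unfold unfold_step.
  rewrite (Hmor_comp k H _ _ _ h f Hh Hf), <- !klcomp_assoc, Eh; reflexivity.
Qed.

Lemma id_le_unfold_prefixpoint (m : klrel mu mu) :
  klhom k mu mu m -> klle (unfold_step j m) m -> klle (klid mu) m.
Proof.
  intros Hm pre_m.
  assert (pre_id : klle (unfold_step j (klid mu)) (klid mu)).
  { unfold unfold_step; rewrite Hmor_id, klcomp_id_l, iota_j; apply klle_refl. }
  pose proof (klhom_unfold_step _ j Hj) as F_hom.
  pose proof (unfold_step_mono _ j) as F_mono.
  pose proof (klhom_kllfp k _ _ (unfold_step j) _ (klhom_id k mu) pre_id) as Hlfp.
  assert (Elfp : kllfp k mu mu (unfold_step j) = klid mu).
  { apply (initial_algebra_endo_id k H mu iota Hinit); [exact Hlfp|].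
    rewrite (kllfp_fixed k _ _ _ F_hom F_mono _ (klhom_id k mu) pre_id) at 1.
    unfold unfold_step; rewrite <- !klcomp_assoc, j_iota, klcomp_id_r; reflexivity. }
  rewrite <- Elfp; apply bigI_le; assumption.
Qed.

Lemma coalgebra_morphism_le (B : NomSet) (b : klrel B (Hob H B)) (h1 h2 : klrel B mu) :
  klhom k B mu h1 -> klhom k B mu h2 ->
  klcomp j h1 = klcomp (Hmor H h1) b -> klcomp j h2 = klcomp (Hmor H h2) b ->
  klle h1 h2.
Proof.
  intros Hh1 Hh2 E1 E2.
  set (m := bigU k (fun f : klrel mu mu => klle (klcomp f h1) h2)).
  assert (Hm : klhom k mu mu m) by apply klhom_bigU.
  assert (m_h1 : klle (klcomp m h1) h2).
  { intros x z [y [Hxy [f [Pf [_ Hyz]]]]]; apply Pf; exists y; auto. }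
  assert (pre_m : klle (unfold_step j m) m).
  { apply le_bigU; [|apply klhom_unfold_step; assumption].
    rewrite (unfold_step_comp _ _ b j h1 m Hh1 Hm E1).
    rewrite (proj1 (coalgebra_morphism_iff_fixed _ b h2) E2) at 1.
    apply unfold_step_mono; [apply klhom_comp|..]; assumption. }
  intros x y Hxy; apply m_h1; exists y; split; [exact Hxy|].
  apply (id_le_unfold_prefixpoint m Hm pre_m); reflexivity.
Qed.

Theorem inverse_initial_algebra_terminal : is_terminal_coalgebra H mu j.
Proof.
  split; [exact Hj|]; intros B b Hb.
  pose proof (klgfp_fixed k _ _ (unfold_step b)
                (klhom_unfold_step _ b Hb) (unfold_step_mono _ b)) as Egfp.
  apply coalgebra_morphism_iff_fixed in Egfp.
  exists (klgfp k B mu (unfold_step b)); split; [apply klhom_bigU|split; [exact Egfp|]].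
  intros h Hh Eh; apply klle_antisym; apply (coalgebra_morphism_le B b);
    solve [assumption | apply klhom_bigU].
Qed.

End TerminalCoalgebra.

Theorem corollary3p8 (k : PowKind) (H : KlEndo k) (mu : NomSet)
    (iota : klrel (Hob H mu) mu) :
  locally_monotone H ->
  is_initial_algebra H mu iota ->
  (exists j : klrel mu (Hob H mu),
      klhom k mu (Hob H mu) j /\
      klcomp j iota = klid (Hob H mu) /\ klcomp iota j = klid mu) /\
  (forall j : klrel mu (Hob H mu),
      klhom k mu (Hob H mu) j ->
      klcomp j iota = klid (Hob H mu) -> klcomp iota j = klid mu ->
      is_terminal_coalgebra H mu j).
Proof.
  intros H_mono Hinit; split.
  - exact (lambek k H mu iota Hinit).
  - intros j Hj j_iota iota_j.
    exact (inverse_initial_algebra_terminal k H mu iota j H_mono Hinit Hj j_iota iota_j).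
Qed.
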